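(* In the two-parallel-path setting with the linear decision rule, suppose $l_v=0$ for all vertices, $m<n$, all initial pheromone levels are positive, the inputs $f_s(t),b_d(t)$ are positive and non-decreasing in $t$, and the initial flows at vertices other than $s,d$ satisfy $f_v(0)\le f_s(0)$, $b_v(0)\le b_d(0)$. Let $T_1=\max_{(u,v)\in E}\log(p_{uv}(0)/(f_s(0)+b_d(0)))/\log(1/\delta)$. Then for every integer $t\ge L+\max(0,T_1)$, $$r_{ss_1}(t+1)\ \ge\ r_{\min}(t)\left(1+\frac{(1-\delta)\big(b_d(t-m+1)-b_d(t-n+1)\big)}{6\big(f_s(t)+b_d(t)\big)}\right).$$
   Context: Model (linear decision rule). Directed graph $G=(V,E)$, source $s$, destination $d$, discrete time; pheromone $p_{uv}(t)$, forward flows $f_v(t)$, backward flows $b_v(t)$; leakages $l_v\in[0,1]$; decay $\delta\in(0,1)$; exogenous inputs $f_s(t),b_d(t)$. Edge flows: $f_{uv}(t)=f_u(t)p_{uv}(t)/\sum_{z:(u,z)\in E}p_{uz}(t)$, $b_{uv}(t)=b_v(t)p_{uv}(t)/\sum_{z:(z,v)\in E}p_{zv}(t)$ (at a vertex with a single outgoing, resp. incoming, edge the whole flow goes along it). Updates: $f_v(t+1)=(1-l_v)\sum_{z:(z,v)\in E}f_{zv}(t)$ for $v\neq s$, $b_u(t+1)=(1-l_u)\sum_{z:(u,z)\in E}b_{uz}(t)$ for $u\ne d$, $p_{uv}(t+1)=\delta(p_{uv}(t)+f_{uv}(t)+b_{uv}(t))$. Two parallel paths: $G$ is the union of directed paths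 $P_1,P_2$ from $s$ to $d$ sharing only $s,d$; $s_1,s_2$ are the successors of $s$ and $d_1,d_2$ the predecessors of $d$ on $P_1,P_2$; $m=\mathrm{len}(P_1)$, $n=\mathrm{len}(P_2)$ (numbers of edges), $L=\max(m,n)$. Potential: $r_{ss_1}(t)=p_{ss_1}(t)/p_{ss_2}(t)$, $r_{d_1d}(t)=p_{d_1d}(t)/p_{d_2d}(t)$, and for $t\ge L$, $r_{\min}(t)=\min\{r_{ss_1}(t-i),\,r_{d_1d}(t-i):0\le i\le L-1\}$. *)

From HB Require Import structures.
From mathcomp Require Import all_boot all_order all_algebra.
From mathcomp Require Import all_classical all_reals exp.
Set Implicit Arguments. Unset Strict Implicit. Unset Printing Implicit Defensive.
Import Order.TTheory GRing.Theory Num.Theory.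
Local Open Scope ring_scope.

Section Model.
Variables (R : realType) (V : finType) (E : rel V).

Definition fedge (p : V -> V -> R) (f : V -> R) (u v : V) : R :=
  if #|[pred z | E u z]| == 1%N then f u
  else f u * p u v / (\sum_(z | E u z) p u z).

Definition bedge (p : V -> V -> R) (b : V -> R) (u v : V) : R :=
  if #|[pred z | E z v]| == 1%N then b v
  else b v * p u v / (\sum_(z | E z v) p z v).

(* (p, f, b) is a trajectory of the linear-decision-rule dynamics with
   source s, destination d, leakages l and decay delta; f t s and b t d
   are the exogenous inputs (left unconstrained by the dynamics). *)
Definition is_trajectory (s d : V) (l : V -> R) (delta : R)
    (p : nat -> V -> V -> R) (f b : nat -> V -> R) : Prop :=
  forall t : nat,
    (forall v, v != s ->
       f t.+1 v = (1 - l v) * \sum_(z | E z v) fedge (p t) (f t) z v) /\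
    (forall u, u != d ->
       b t.+1 u = (1 - l u) * \sum_(z | E u z) bedge (p t) (b t) u z) /\
    (forall u v, E u v ->
       p t.+1 u v = delta * (p t u v + fedge (p t) (f t) u v + bedge (p t) (b t) u v)).
End Model.

(* Vertices: inl true = s, inl false = d,
   inr (inl i) = the (i+1)-th vertex of P1 (internal, i < m-1),
   inr (inr j) = the (j+1)-th vertex of P2 (internal, j < n-1). *)
Definition TPV (m n : nat) : finType :=
  (bool + ('I_(m.-1) + 'I_(n.-1)))%type.

Definition src {m n : nat} : TPV m n := inl true.
Definition dst {m n : nat} : TPV m n := inl false.

(* k-th vertex of P1 (k = 0..m), resp. of P2 (k = 0..n) *)
Definition pos1 (m n : nat) (k : nat) : TPV m n :=
  if k == 0%N then src
  else if (insub k.-1 : option 'I_(m.-1)) is Some i then inr (inl i) else dst.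
Definition pos2 (m n : nat) (k : nat) : TPV m n :=
  if k == 0%N then src
  else if (insub k.-1 : option 'I_(n.-1)) is Some j then inr (inr j) else dst.

Definition TPE (m n : nat) : rel (TPV m n) := fun u v =>
  [exists i : 'I_m, (u == pos1 m n i) && (v == pos1 m n i.+1)] ||
  [exists j : 'I_n, (u == pos2 m n j) && (v == pos2 m n j.+1)].

Section Potential.
Variables (R : realType) (m n : nat) (p : nat -> TPV m n -> TPV m n -> R).

Definition s1 : TPV m n := pos1 m n 1.
Definition s2 : TPV m n := pos2 m n 1.
Definition d1 : TPV m n := pos1 m n m.-1.
Definition d2 : TPV m n := pos2 m n n.-1.

Definition r_ss1 (t : nat) : R := p t src s1 / p t src s2.
Definition r_d1d (t : nat) : R := p t d1 dst / p t d2 dst.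

Definition Lmax : nat := maxn m n.

Definition r_min (t : nat) : R :=
  \big[Num.min/r_ss1 t]_(i < Lmax) Num.min (r_ss1 (t - i)) (r_d1d (t - i)).
End Potential.

Definition T1 (R : realType) (m n : nat) (delta : R)
    (p : nat -> TPV m n -> TPV m n -> R) (f b : nat -> TPV m n -> R) : R :=
  let g := fun u v => ln (p 0%N u v / (f 0%N src + b 0%N dst)) / ln (1 / delta) in
  \big[Num.max/g src (s1 m n)]_(e : TPV m n * TPV m n | TPE e.1 e.2) g e.1 e.2.

From HB Require Import structures.
From mathcomp Require Import all_boot all_order all_algebra.
From mathcomp Require Import all_classical all_reals exp.
From mathcomp Require Import ring lra zify.
Set Implicit Arguments. Unset Strict Implicit. Unset Printing Implicit Defensive.
Import Order.TTheory GRing.Theory Num.Theory.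
Local Open Scope ring_scope.

(* Without leakage every interior vertex of a path just
   relays the flow it receives, so
   (i)   each vertex carries at most the current input of its kind and all
         pheromone levels stay positive;
   (ii)  the backward flow arriving at the source along P1 (resp. P2) at time
         t left the destination m-1 (resp. n-1) steps earlier, split there in
         proportion to the pheromone on d1 and d2 at that time;
   (iii) pheromone obeys p(t+1) <= delta (p(t) + M(t)), hence
         p(t) <= delta^t p(0) + delta/(1-delta) M(t) <= M(t)/(1-delta) for t >= T1.
   By (ii) the new source ratio is an explicit quotient in which every split
   favours P1 with ratio at least r_min(t); together with (iii) a purely
   algebraic inequality ([potential_update]) yields the claimed growth. *)

Section FlowSplitting.
Variables (R : realType) (V : finType) (E : rel V).

Lemma sum_pred2 (F : V -> R) (P : pred V) u w : u != w ->
  (forall z, P z = (z == u) || (z == w)) -> \sum_(z | P z) F z = F u + F w.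
Proof.
move=> uw Puw; rewrite (bigD1 u) ?Puw ?eqxx //=; congr (_ + _).
apply: big_pred1 => z /=; rewrite Puw.
by case: (eqVneq z u) => [->|_] /=; rewrite ?(negbTE uw) ?andbT.
Qed.

Lemma card_pred2 (P : pred V) u w : u != w ->
  (forall z, P z = (z == u) || (z == w)) -> #|[pred z | P z]| = 2%N.
Proof.
by move=> uw Puw; rewrite (@eq_card _ _ (pred2 u w)) ?card2 ?uw // => z; rewrite !inE Puw.
Qed.

Lemma fedge_bounds (P : V -> V -> R) (F : V -> R) u v : E u v ->
  (forall z, E u z -> 0 < P u z) -> 0 <= F u -> 0 <= fedge E P F u v <= F u.
Proof.
move=> huv Ppos F0; rewrite /fedge; case: ifP => _; first by rewrite F0 lexx.
have Pv_le : P u v <= \sum_(z | E u z) P u z.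
  rewrite (bigD1 v) //= lerDl; apply: sumr_ge0 => z /andP[hz _]; exact: ltW (Ppos z hz).
have S0 : 0 < \sum_(z | E u z) P u z := lt_le_trans (Ppos v huv) Pv_le.
apply/andP; split; last by rewrite ler_pdivrMr // ler_wpM2l.
by apply: divr_ge0; [apply: mulr_ge0 => //; exact: ltW (Ppos _ huv) | exact: ltW].
Qed.

Lemma bedge_bounds (P : V -> V -> R) (B : V -> R) u v : E u v ->
  (forall z, E z v -> 0 < P z v) -> 0 <= B v -> 0 <= bedge E P B u v <= B v.
Proof.
move=> huv Ppos B0; rewrite /bedge; case: ifP => _; first by rewrite B0 lexx.
have Pu_le : P u v <= \sum_(z | E z v) P z v.
  rewrite (bigD1 u) //= lerDl; apply: sumr_ge0 => z /andP[hz _]; exact: ltW (Ppos z hz).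
have S0 : 0 < \sum_(z | E z v) P z v := lt_le_trans (Ppos u huv) Pu_le.
apply/andP; split; last by rewrite ler_pdivrMr // ler_wpM2l.
by apply: divr_ge0; [apply: mulr_ge0 => //; exact: ltW (Ppos _ huv) | exact: ltW].
Qed.

Lemma bedge_single (P : V -> V -> R) (B : V -> R) u v :
  (forall z, E z v = (z == u)) -> bedge E P B u v = B v.
Proof.
by move=> Ev; rewrite /bedge (@eq_card _ _ (pred1 u)) ?card1.
Qed.

Lemma fedge_pair (P : V -> V -> R) (F : V -> R) u v1 v2 v :
  v1 != v2 -> (forall z, E u z = (z == v1) || (z == v2)) ->
  fedge E P F u v = F u * (P u v / (P u v1 + P u v2)).
Proof.
move=> v12 Eu; rewrite /fedge (card_pred2 v12 Eu) /=.
by rewrite (sum_pred2 _ v12 Eu) mulrA.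
Qed.

Lemma bedge_pair (P : V -> V -> R) (B : V -> R) u1 u2 u v :
  u1 != u2 -> (forall z, E z v = (z == u1) || (z == u2)) ->
  bedge E P B u v = B v * (P u v / (P u1 v + P u2 v)).
Proof.
move=> u12 Ev; rewrite /bedge (card_pred2 u12 Ev) /=.
by rewrite (sum_pred2 (fun z => P z v) u12 Ev) mulrA.
Qed.

End FlowSplitting.

Section ZeroLeakage.
Variables (R : realType) (V : finType) (E : rel V) (s d : V) (l : V -> R)
  (delta : R) (p : nat -> V -> V -> R) (f b : nat -> V -> R).
Hypotheses (no_leak : forall v, l v = 0)
  (traj : is_trajectory E s d l delta p f b).

Lemma f_succ t v : v != s -> f t.+1 v = \sum_(z | E z v) fedge E (p t) (f t) z v.
Proof. by move=> vs; rewrite (traj t).1 // no_leak subr0 mul1r. Qed.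

Lemma b_succ t u : u != d -> b t.+1 u = \sum_(z | E u z) bedge E (p t) (b t) u z.
Proof. by move=> ud; rewrite (traj t).2.1 // no_leak subr0 mul1r. Qed.

Lemma p_succ t u v : E u v ->
  p t.+1 u v = delta * (p t u v + fedge E (p t) (f t) u v + bedge E (p t) (b t) u v).
Proof. exact: (traj t).2.2. Qed.

Lemma bedge_relay t u v w : v != d ->
  (forall z, E z v = (z == u)) -> (forall z, E v z = (z == w)) ->
  bedge E (p t.+1) (b t.+1) u v = bedge E (p t) (b t) v w.
Proof.
move=> vd Ev Ew; rewrite bedge_single // b_succ //.
by rewrite (eq_bigl (pred1 w)) ?big_pred1_eq.
Qed.

Lemma bedge_transport (q : nat -> V) (len : nat) :
  (forall k, (k.+1 < len)%N -> [/\ q k.+1 != d,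
     forall z, E z (q k.+1) = (z == q k) & forall z, E (q k.+1) z = (z == q k.+2)]) ->
  forall j t, (j < len)%N ->
  bedge E (p (t + j)) (b (t + j)) (q 0) (q 1) = bedge E (p t) (b t) (q j) (q j.+1).
Proof.
move=> relay; elim=> [|j IH] t hj; first by rewrite addn0.
rewrite -addSnnS IH 1?ltnW //.
by have [qd Ein Eout] := relay j hj; exact: bedge_relay.
Qed.

End ZeroLeakage.

Lemma geometric_bound (R : realFieldType) (delta : R) (x M : nat -> R) :
  0 < delta -> delta < 1 -> 0 <= M 0%N -> (forall t, M t <= M t.+1) ->
  (forall t, x t.+1 <= delta * (x t + M t)) ->
  forall t, x t <= delta ^+ t * x 0%N + delta / (1 - delta) * M t.
Proof.
move=> d0 d1 M0 Mmono xstep.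
have c0 : 0 <= delta / (1 - delta) by apply: divr_ge0; lra.
elim=> [|t IH]; first by rewrite expr0 mul1r lerDl mulr_ge0.
have gain : delta * (delta / (1 - delta) + 1) = delta / (1 - delta).
  by field; rewrite subr_eq0 gt_eqF.
apply: (le_trans (xstep t)).
apply: (@le_trans _ _ (delta * (delta ^+ t * x 0%N + delta / (1 - delta) * M t + M t))).
  by apply: ler_wpM2l; [exact: ltW | rewrite lerD2r].
have -> : delta * (delta ^+ t * x 0%N + delta / (1 - delta) * M t + M t)
    = delta ^+ t.+1 * x 0%N + delta * (delta / (1 - delta) + 1) * M t.
  by rewrite exprS; ring.
by rewrite gain lerD2l ler_wpM2l.
Qed.

(* The threshold T1 is the time after which delta^t x has decayed below M. *)
Lemma decay_below (R : realType) (delta x M : R) (t : nat) :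
  0 < delta -> delta < 1 -> 0 < x -> 0 < M ->
  ln (x / M) / ln (1 / delta) <= t%:R -> delta ^+ t * x <= M.
Proof.
move=> d0 d1 x0 M0 ht.
have invd0 : 0 < 1 / delta by rewrite divr_gt0.
have lnd0 : 0 < ln (1 / delta) by apply: ln_gt0; rewrite ltr_pdivlMr // mul1r.
rewrite ler_pdivrMr // mulr_natl -(lnXn t invd0) in ht.
rewrite ler_ln ?posrE ?exprn_gt0 ?divr_gt0 // ler_pdivrMr // in ht.
apply: (le_trans (ler_wpM2l (exprn_ge0 t (ltW d0)) ht)).
by rewrite mulrA -exprMn mul1r divff ?expr1n ?mul1r // lt0r_neq0.
Qed.

Lemma share_bounds (R : realFieldType) (r a c : R) :
  0 <= r -> 0 < a -> 0 < c -> r * c <= a ->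
  r <= (1 + r) * (a / (a + c)) /\ (1 + r) * (c / (a + c)) <= 1.
Proof.
move=> r0 a0 c0 rca; have ac0 : 0 < a + c by lra.
by rewrite !mulrA ler_pdivlMr // ler_pdivrMr //; split; nra.
Qed.

Lemma weighted_gain (R : realFieldType) (r X Y g h : R) :
  0 <= r -> 0 <= X -> 0 <= Y -> r <= (1 + r) * g -> (1 + r) * h <= 1 ->
  r * (X - Y) <= (1 + r) * (X * g - r * (Y * h)).
Proof.
move=> r0 X0 Y0 hg hh; have rY0 : 0 <= r * Y by exact: mulr_ge0.
have gX : X * r <= X * ((1 + r) * g) by exact: ler_wpM2l.
have hY : r * Y * ((1 + r) * h) <= r * Y by exact: ler_piMr.
by move: gX hY; rewrite -!mulrA; nra.
Qed.

Lemma ratio_lower (R : realFieldType) (r g K N D : R) :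
  0 < r -> 0 <= g -> 0 < D -> 0 < K ->
  r * g <= (1 + r) * (N - r * D) -> (1 + r) * D <= K -> r * (1 + g / K) <= N / D.
Proof.
move=> r0 g0 D0 K0 gain DK; rewrite ler_pdivlMr //.
have DK1 : (1 + r) * D / K <= 1 by rewrite ler_pdivrMr // mul1r.
have shrink : r * g * ((1 + r) * D / K) <= r * g by rewrite ler_piMr // mulr_ge0 // ltW.
have expand : (1 + r) * (r * (1 + g / K) * D) = (1 + r) * r * D + r * g * ((1 + r) * D / K).
  by field; rewrite gt_eqF.
rewrite -(@ler_pM2l _ (1 + r)) ?expand; lra.
Qed.

Lemma denominator_bound (R : realFieldType) (delta r P1 P2 F B b2 w q2 : R) :
  0 < delta -> delta < 1 -> 0 <= r -> 0 <= F -> 0 < B -> 0 <= b2 -> b2 <= B ->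
  r * P2 <= P1 -> (1 + r) * w <= 1 -> (1 + r) * q2 <= 1 ->
  P1 + P2 <= 2 * (F + B) / (1 - delta) ->
  (1 + r) * (P2 + F * w + b2 * q2) <= 3 * (F + B) / (1 - delta).
Proof.
move=> d0 d1 r0 F0 B0 b20 b2B rP w_up q2_up Pbound.
have Fw : (1 + r) * (F * w) <= F by rewrite mulrCA; apply: ler_piMr.
have bq : (1 + r) * (b2 * q2) <= b2 by rewrite mulrCA; apply: ler_piMr.
have Mup : F + B <= (F + B) / (1 - delta) by rewrite ler_pdivlMr; nra.
have -> : 3 * (F + B) / (1 - delta) = 2 * (F + B) / (1 - delta) + (F + B) / (1 - delta).
  by field; rewrite subr_eq0 gt_eqF.
nra.
Qed.

(* The pheromone ratio on the source
   edges after one step is (P1 + F u + b1 q1)/(P2 + F w + b2 q2): old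
   pheromone, forward flow split with shares u, w, and backward flow b1, b2
   that left the destination m - 1 resp. n - 1 steps earlier, split there
   with shares q1 = a1/(a1+c1), q2 = c2/(a2+c2). *)
Lemma potential_update (R : realFieldType)
    (delta r P1 P2 F B b1 b2 a1 c1 a2 c2 : R) :
  0 < delta -> delta < 1 -> 0 < r -> 0 < P1 -> 0 < P2 -> 0 <= F -> 0 < B ->
  0 <= b2 -> b2 <= b1 -> b1 <= B -> 0 < a1 -> 0 < c1 -> 0 < a2 -> 0 < c2 ->
  r * P2 <= P1 -> r * c1 <= a1 -> r * c2 <= a2 ->
  P1 + P2 <= 2 * (F + B) / (1 - delta) ->
  r * (1 + (1 - delta) * (b1 - b2) / (6 * (F + B))) <=
  (delta * (P1 + F * (P1 / (P1 + P2)) + b1 * (a1 / (a1 + c1)))) /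
  (delta * (P2 + F * (P2 / (P1 + P2)) + b2 * (c2 / (a2 + c2)))).
Proof.
move=> d0 d1 r0 P10 P20 F0 B0 b20 b21 b1B a10 c10 a20 c20 rP rc1 rc2 Pbound.
have [u_low w_up] := share_bounds (ltW r0) P10 P20 rP.
have [q1_low _] := share_bounds (ltW r0) a10 c10 rc1.
have [_ q2_up] := share_bounds (ltW r0) a20 c20 rc2.
set u := P1 / (P1 + P2) in u_low *; set w := P2 / (P1 + P2) in w_up *.
set q1 := a1 / (a1 + c1) in q1_low *; set q2 := c2 / (a2 + c2) in q2_up *.
set N := P1 + F * u + b1 * q1; set D := P2 + F * w + b2 * q2.
have w0 : 0 <= w by rewrite divr_ge0 // ltW // addr_gt0.
have q20 : 0 <= q2 by rewrite divr_ge0 // ltW // addr_gt0.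
have D0 : 0 < D.
  by have := mulr_ge0 F0 w0; have := mulr_ge0 b20 q20; rewrite /D; lra.
have gain : r * (b1 - b2) <= (1 + r) * (N - r * D).
  have gF := weighted_gain (ltW r0) F0 F0 u_low w_up.
  have gb := weighted_gain (ltW r0) (le_trans b20 b21) b20 q1_low q2_up.
  rewrite /N /D; nra.
have Dbound : (1 + r) * D <= 3 * (F + B) / (1 - delta).
  exact: denominator_bound d0 d1 (ltW r0) F0 B0 b20 (le_trans b21 b1B) rP w_up q2_up Pbound.
have K0 : 0 < 3 * (F + B) / (1 - delta) by rewrite divr_gt0 // ?subr_gt0; lra.
have g0 : 0 <= b1 - b2 by lra.
have x0 : 0 <= (1 - delta) * (b1 - b2) / (6 * (F + B)) by apply: divr_ge0; nra.
have eqK : (b1 - b2) / (3 * (F + B) / (1 - delta))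
    = 2 * ((1 - delta) * (b1 - b2) / (6 * (F + B))).
  have FB0 : F + B != 0 by apply: lt0r_neq0; lra.
  have d10 : 1 - delta != 0 by apply: lt0r_neq0; lra.
  by field; rewrite FB0 d10.
have cancel : delta * N / (delta * D) = N / D.
  by rewrite -mulf_div divff ?mul1r // gt_eqF.
rewrite cancel; apply: le_trans (ratio_lower r0 g0 D0 K0 gain Dbound).
rewrite eqK ler_pM2l // lerD2l; lra.
Qed.

Section TwoPathGraph.
Variables (m n : nat).
Hypotheses (m_gt0 : (0 < m)%N) (n_gt1 : (1 < n)%N).

Local Notation E := (@TPE m n).
Local Notation P1 := (pos1 m n).
Local Notation P2 := (pos2 m n).

Lemma pos1_eq_src k : (P1 k == src) = (k == 0)%N.
Proof. by rewrite /pos1; case: k => [|k] //=; case: insubP. Qed.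

Lemma pos1_eq_dst k : (P1 k == dst) = (m <= k)%N.
Proof.
rewrite /pos1; case: k => [|k] /=; first by rewrite leqNgt m_gt0.
by case: insubP => [i + _|] /=; [move=> ?; apply/esym/negbTE|rewrite eqxx => ?; apply/esym]; lia.
Qed.

Lemma pos1_eq_inner1 k (i : 'I_m.-1) : (P1 k == inr (inl i)) = (k == i.+1)%N.
Proof.
rewrite /pos1; case: k => [|k] //=; case: insubP => [i' _ Hv|Hn] /=.
  by rewrite eqSS -Hv; apply/eqP/eqP => [[->]|/val_inj->].
by apply/esym/negbTE; move: Hn (ltn_ord i); lia.
Qed.

Lemma pos1_neq_inner2 k (j : 'I_n.-1) : (P1 k == inr (inr j)) = false.
Proof. by rewrite /pos1; case: k => [|k] //=; case: insubP. Qed.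

Lemma pos2_eq_src k : (P2 k == src) = (k == 0)%N.
Proof. by rewrite /pos2; case: k => [|k] //=; case: insubP. Qed.

Lemma pos2_eq_dst k : (P2 k == dst) = (n <= k)%N.
Proof.
rewrite /pos2; case: k => [|k] /=; first by rewrite leqNgt ltnW.
by case: insubP => [i + _|] /=; [move=> ?; apply/esym/negbTE|rewrite eqxx => ?; apply/esym]; lia.
Qed.

Lemma pos2_eq_inner2 k (j : 'I_n.-1) : (P2 k == inr (inr j)) = (k == j.+1)%N.
Proof.
rewrite /pos2; case: k => [|k] //=; case: insubP => [j' _ Hv|Hn] /=.
  by rewrite eqSS -Hv; apply/eqP/eqP => [[->]|/val_inj->].
by apply/esym/negbTE; move: Hn (ltn_ord j); lia.
Qed.

Lemma pos2_neq_inner1 k (i : 'I_m.-1) : (P2 k == inr (inl i)) = false.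
Proof. by rewrite /pos2; case: k => [|k] //=; case: insubP. Qed.

Lemma TPEP u v : reflect
  ((exists k, [/\ (k < m)%N, u = P1 k & v = P1 k.+1]) \/
   (exists k, [/\ (k < n)%N, u = P2 k & v = P2 k.+1])) (E u v).
Proof.
apply: (iffP orP) => [[/existsP[i /andP[/eqP-> /eqP->]]|/existsP[i /andP[/eqP-> /eqP->]]]|].
- by left; exists i.
- by right; exists i.
case=> [[k [km -> ->]]|[k [kn -> ->]]].
- by left; apply/existsP; exists (Ordinal km); rewrite !eqxx.
- by right; apply/existsP; exists (Ordinal kn); rewrite !eqxx.
Qed.

Lemma out_src z : E src z = (z == s1 m n) || (z == s2 m n).
Proof.
apply/TPEP/orP => [[[k [_ /esym/eqP + ->]]|[k [_ /esym/eqP + ->]]]|].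
- by rewrite pos1_eq_src => /eqP->; left.
- by rewrite pos2_eq_src => /eqP->; right.
by case=> /eqP->; [left|right]; exists 0%N; split=> //; lia.
Qed.

Lemma in_dst z : E z dst = (z == d1 m n) || (z == d2 m n).
Proof.
apply/TPEP/orP => [[[k [km -> /esym/eqP]]|[k [kn -> /esym/eqP]]]|].
- by rewrite pos1_eq_dst => mk; left; have -> : k = m.-1 by lia.
- by rewrite pos2_eq_dst => nk; right; have -> : k = n.-1 by lia.
case=> /eqP->; [left; exists m.-1|right; exists n.-1]; split=> //; try lia;
  by apply/esym/eqP; rewrite ?pos1_eq_dst ?pos2_eq_dst; lia.
Qed.

Lemma no_out_dst z : E dst z = false.
Proof.
apply/negbTE/negP => /TPEP [[k [km /esym/eqP + _]]|[k [kn /esym/eqP + _]]];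
  rewrite ?pos1_eq_dst ?pos2_eq_dst; lia.
Qed.

Lemma no_in_src z : E z src = false.
Proof.
by apply/negbTE/negP => /TPEP [[k [_ _ /esym/eqP]]|[k [_ _ /esym/eqP]]];
  rewrite ?pos1_eq_src ?pos2_eq_src.
Qed.

Lemma inner1_in (i : 'I_m.-1) z : E z (inr (inl i)) = (z == P1 i).
Proof.
apply/TPEP/idP => [[[k [_ -> /esym/eqP]]|[k [_ _ /esym/eqP]]]|/eqP->].
- by rewrite pos1_eq_inner1 eqSS => /eqP->.
- by rewrite pos2_neq_inner1.
by left; exists i; split=> //; [move: (ltn_ord i); lia | apply/esym/eqP; rewrite pos1_eq_inner1].
Qed.

Lemma inner1_out (i : 'I_m.-1) z : E (inr (inl i)) z = (z == P1 i.+2).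
Proof.
apply/TPEP/idP => [[[k [_ /esym/eqP + ->]]|[k [_ /esym/eqP + _]]]|/eqP->].
- by rewrite pos1_eq_inner1 => /eqP->.
- by rewrite pos2_neq_inner1.
by left; exists i.+1; split=> //; [move: (ltn_ord i); lia | apply/esym/eqP; rewrite pos1_eq_inner1].
Qed.

Lemma inner2_in (j : 'I_n.-1) z : E z (inr (inr j)) = (z == P2 j).
Proof.
apply/TPEP/idP => [[[k [_ _ /esym/eqP]]|[k [_ -> /esym/eqP]]]|/eqP->].
- by rewrite pos1_neq_inner2.
- by rewrite pos2_eq_inner2 eqSS => /eqP->.
by right; exists j; split=> //; [move: (ltn_ord j); lia | apply/esym/eqP; rewrite pos2_eq_inner2].
Qed.

Lemma inner2_out (j : 'I_n.-1) z : E (inr (inr j)) z = (z == P2 j.+2).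
Proof.
apply/TPEP/idP => [[[k [_ /esym/eqP + _]]|[k [_ /esym/eqP + ->]]]|/eqP->].
- by rewrite pos1_neq_inner2.
- by rewrite pos2_eq_inner2 => /eqP->.
by right; exists j.+1; split=> //; [move: (ltn_ord j); lia | apply/esym/eqP; rewrite pos2_eq_inner2].
Qed.

Lemma path1_relay k : (k.+1 < m)%N -> [/\ P1 k.+1 != dst,
  forall z, E z (P1 k.+1) = (z == P1 k) & forall z, E (P1 k.+1) z = (z == P1 k.+2)].
Proof.
move=> km; have ki : (k < m.-1)%N by lia.
have -> : P1 k.+1 = inr (inl (Ordinal ki)) by apply/eqP; rewrite pos1_eq_inner1.
by split=> // z; rewrite ?inner1_in ?inner1_out.
Qed.

Lemma path2_relay k : (k.+1 < n)%N -> [/\ P2 k.+1 != dst,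
  forall z, E z (P2 k.+1) = (z == P2 k) & forall z, E (P2 k.+1) z = (z == P2 k.+2)].
Proof.
move=> kn; have kj : (k < n.-1)%N by lia.
have -> : P2 k.+1 = inr (inr (Ordinal kj)) by apply/eqP; rewrite pos2_eq_inner2.
by split=> // z; rewrite ?inner2_in ?inner2_out.
Qed.

Lemma inner_neighbours v : v != src -> v != dst -> exists u w,
  (forall z, E z v = (z == u)) /\ (forall z, E v z = (z == w)).
Proof.
case: v => [[]|[i|j]] // _ _.
- by exists (P1 i), (P1 i.+2); split; [exact: inner1_in | exact: inner1_out].
- by exists (P2 j), (P2 j.+2); split; [exact: inner2_in | exact: inner2_out].
Qed.

Lemma edge_src_s1 : E src (s1 m n). Proof. by rewrite out_src eqxx. Qed.
Lemma edge_src_s2 : E src (s2 m n). Proof. by rewrite out_src eqxx orbT. Qed.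
Lemma edge_d1_dst : E (d1 m n) dst. Proof. by rewrite in_dst eqxx. Qed.
Lemma edge_d2_dst : E (d2 m n) dst. Proof. by rewrite in_dst eqxx orbT. Qed.

Lemma s1_neq_s2 : s1 m n != s2 m n.
Proof.
have j0 : (0 < n.-1)%N by lia.
have /eqP-> : s2 m n == inr (inr (Ordinal j0)) by rewrite pos2_eq_inner2.
by rewrite pos1_neq_inner2.
Qed.

Lemma d1_neq_d2 : d1 m n != d2 m n.
Proof.
have jn : (n.-2 < n.-1)%N by lia.
have /eqP-> : d2 m n == inr (inr (Ordinal jn)) by rewrite pos2_eq_inner2 /=; apply/eqP; lia.
by rewrite pos1_neq_inner2.
Qed.

End TwoPathGraph.

Section TwoPathDynamics.
Variables (R : realType) (m n : nat) (l : TPV m n -> R) (delta : R)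
  (p : nat -> TPV m n -> TPV m n -> R) (f b : nat -> TPV m n -> R).
Hypotheses (m_gt0 : (0 < m)%N) (m_lt_n : (m < n)%N)
  (delta_gt0 : 0 < delta) (delta_lt1 : delta < 1)
  (no_leak : forall v, l v = 0)
  (traj : is_trajectory (@TPE m n) src dst l delta p f b)
  (p0_pos : forall u v, TPE u v -> 0 < p 0%N u v)
  (f_src : forall t : nat, 0 < f t src /\ f t src <= f t.+1 src)
  (b_dst : forall t : nat, 0 < b t dst /\ b t dst <= b t.+1 dst)
  (f0_bounded : forall v, v != src -> v != dst -> 0 <= f 0%N v /\ f 0%N v <= f 0%N src)
  (b0_bounded : forall v, v != src -> v != dst -> 0 <= b 0%N v /\ b 0%N v <= b 0%N dst).

Local Notation E := (@TPE m n).
Let n_gt1 : (1 < n)%N := leq_ltn_trans m_gt0 m_lt_n.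

Definition inflow (t : nat) : R := f t src + b t dst.

Lemma inflow_gt0 t : 0 < inflow t.
Proof. by rewrite addr_gt0 ?(f_src t).1 ?(b_dst t).1. Qed.

Lemma b_dst_mono : {homo (fun t => b t dst) : i j / (i <= j)%N >-> i <= j}.
Proof. exact: homo_leq (@lexx _ _) (@le_trans _ _) (fun t => (b_dst t).2). Qed.

Lemma inflow_mono : {homo inflow : i j / (i <= j)%N >-> i <= j}.
Proof.
apply: homo_leq (@lexx _ _) (@le_trans _ _) _ => t.
by rewrite lerD ?(f_src t).2 ?(b_dst t).2.
Qed.

Definition bounded_state (t : nat) : Prop :=
  [/\ forall v, v != dst -> 0 <= f t v <= f t src,
      forall v, v != src -> 0 <= b t v <= b t dst
    & forall u v, E u v -> 0 < p t u v].

Lemma edge_flows_bounded t : bounded_state t -> forall u v, E u v ->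
  0 <= fedge E (p t) (f t) u v <= f t src /\ 0 <= bedge E (p t) (b t) u v <= b t dst.
Proof.
move=> [fbd bbd ppos] u v huv.
have ud : u != dst by apply: contraTneq huv => ->; rewrite no_out_dst.
have vs : v != src by apply: contraTneq huv => ->; rewrite no_in_src.
have /andP[fu0 fu_le] := fbd u ud; have /andP[bv0 bv_le] := bbd v vs.
have /andP[fe0 fe_le] := fedge_bounds huv (fun z => ppos u z) fu0.
have /andP[be0 be_le] := bedge_bounds huv (fun z => ppos z v) bv0.
by rewrite fe0 be0 (le_trans fe_le) // (le_trans be_le).
Qed.

Lemma bounded_state_all t : bounded_state t.
Proof.
elim: t => [|t IH].
  split=> [v vd|v vs|//].
  - case: (eqVneq v src) => [->|vs]; first by rewrite lexx ltW ?(f_src 0%N).1.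
    by have [-> ->] := f0_bounded vs vd.
  - case: (eqVneq v dst) => [->|vd]; first by rewrite lexx ltW ?(b_dst 0%N).1.
    by have [-> ->] := b0_bounded vs vd.
have flows := edge_flows_bounded IH.
split=> [v vd|v vs|u v huv].
- case: (eqVneq v src) => [->|vs]; first by rewrite lexx ltW ?(f_src t.+1).1.
  have [u [w [Ein _]]] := inner_neighbours m_gt0 n_gt1 vs vd.
  rewrite (f_succ no_leak traj) // (big_pred1 u) //.
  have Euv : E u v by rewrite Ein.
  have /andP[-> le_src] := (flows u v Euv).1.
  exact: le_trans le_src (f_src t).2.
- case: (eqVneq v dst) => [->|vd]; first by rewrite lexx ltW ?(b_dst t.+1).1.
  have [u [w [_ Eout]]] := inner_neighbours m_gt0 n_gt1 vs vd.
  rewrite (b_succ no_leak traj) // (big_pred1 w) //.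
  have Evw : E v w by rewrite Eout.
  have /andP[-> le_dst] := (flows v w Evw).2.
  exact: le_trans le_dst (b_dst t).2.
- have [/andP[fe0 _] /andP[be0 _]] := flows u v huv.
  have [_ _ ppos] := IH.
  rewrite (p_succ traj) // mulr_gt0 //; have := ppos u v huv; lra.
Qed.

Lemma p_pos t u v : E u v -> 0 < p t u v.
Proof. by have [_ _] := bounded_state_all t; apply. Qed.

(* Pheromone is fed by at most the inflow at each step, so it stays below
   its decayed initial value plus delta/(1-delta) times the inflow. *)
Lemma pheromone_bound t u v : E u v ->
  p t u v <= delta ^+ t * p 0%N u v + delta / (1 - delta) * inflow t.
Proof.
move=> huv; apply: (@geometric_bound _ _ (fun s => p s u v) inflow) => //.
- exact: ltW (inflow_gt0 0).
- by move=> s; apply: inflow_mono.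
move=> s; rewrite (p_succ traj) // -addrA; apply: ler_wpM2l; first exact: ltW.
rewrite lerD2l.
by have [/andP[_ ?] /andP[_ ?]] := edge_flows_bounded (bounded_state_all s) huv; apply: lerD.
Qed.

(* After time T1 the initial pheromone has decayed below the inflow, hence
   every pheromone level is at most inflow/(1-delta). *)
Lemma pheromone_le_inflow t u v : E u v -> T1 delta p f b <= t%:R ->
  p t u v <= inflow t / (1 - delta).
Proof.
move=> huv hT; apply: le_trans (pheromone_bound t huv) _.
have decayed : delta ^+ t * p 0%N u v <= inflow 0%N.
  apply: decay_below => //; [exact: p0_pos|exact: inflow_gt0|].
  apply: le_trans hT; rewrite /T1 /inflow /=.
  apply: (@le_bigmax_cond _ _ _ _ (u, v)); exact: huv.
have -> : inflow t / (1 - delta) = inflow t + delta / (1 - delta) * inflow t.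
  by field; rewrite subr_eq0 gt_eqF.
by rewrite lerD2r (le_trans decayed) ?inflow_mono.
Qed.

Lemma arrival1 t : (m.-1 <= t)%N -> bedge E (p t) (b t) src (s1 m n) =
  b (t - m.-1) dst * (p (t - m.-1) (d1 m n) dst /
                      (p (t - m.-1) (d1 m n) dst + p (t - m.-1) (d2 m n) dst)).
Proof.
move=> mt; rewrite -{1 2}(subnK mt).
rewrite (bedge_transport no_leak traj (path1_relay m_gt0 n_gt1)); last lia.
rewrite prednK; last lia.
have /eqP-> : pos1 m n m == dst by rewrite pos1_eq_dst.
exact: bedge_pair (d1_neq_d2 m_gt0 n_gt1) (in_dst m_gt0 n_gt1).
Qed.

Lemma arrival2 t : (n.-1 <= t)%N -> bedge E (p t) (b t) src (s2 m n) =
  b (t - n.-1) dst * (p (t - n.-1) (d2 m n) dst /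
                      (p (t - n.-1) (d1 m n) dst + p (t - n.-1) (d2 m n) dst)).
Proof.
move=> nt; rewrite -{1 2}(subnK nt).
rewrite (bedge_transport no_leak traj (path2_relay m_gt0 n_gt1)); last lia.
rewrite prednK; last lia.
have /eqP-> : pos2 m n n == dst by rewrite pos2_eq_dst.
exact: bedge_pair (d1_neq_d2 m_gt0 n_gt1) (in_dst m_gt0 n_gt1).
Qed.

Let Es1 := edge_src_s1 m_gt0 n_gt1.
Let Es2 := edge_src_s2 m_gt0 n_gt1.
Let Ed1 := edge_d1_dst m_gt0 n_gt1.
Let Ed2 := edge_d2_dst m_gt0 n_gt1.

Lemma source_pheromone_bound t : T1 delta p f b <= t%:R ->
  p t src (s1 m n) + p t src (s2 m n) <= 2 * inflow t / (1 - delta).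
Proof.
move=> T1t.
have -> : 2 * inflow t / (1 - delta) = inflow t / (1 - delta) + inflow t / (1 - delta).
  by ring.
by rewrite lerD // pheromone_le_inflow.
Qed.

Lemma r_min_gt0 t : 0 < r_min p t.
Proof.
have ss1_gt0 k : 0 < r_ss1 p k by rewrite divr_gt0 // p_pos.
have d1d_gt0 k : 0 < r_d1d p k by rewrite divr_gt0 // p_pos.
apply: (big_ind (fun x => 0 < x)) => [|x y x0 y0|i _]; rewrite ?lt_min //.
  by rewrite x0 y0.
by rewrite ss1_gt0 d1d_gt0.
Qed.

Lemma r_min_src_ratio t : r_min p t * p t src (s2 m n) <= p t src (s1 m n).
Proof. by rewrite -ler_pdivlMr ?p_pos //; exact: bigmin_le_id. Qed.

Lemma r_min_dst_ratio t i : (i < Lmax m n)%N ->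
  r_min p t * p (t - i) (d2 m n) dst <= p (t - i) (d1 m n) dst.
Proof.
move=> iL; rewrite -ler_pdivlMr ?p_pos //.
apply: le_trans (bigmin_le _ (Ordinal iL) _) _.
by rewrite ge_min lexx orbT.
Qed.

(* One step of the potential: the new source ratio is assembled from the old
   source pheromone, the forward flow split at the source, and backward flow
   that left the destination m - 1 resp. n - 1 steps ago; all of its
   ingredients are controlled by r_min(t), and the pheromone by the inflow. *)
Lemma potential_growth t : (Lmax m n)%:R + Num.max 0 (T1 delta p f b) <= t%:R ->
  r_min p t * (1 + (1 - delta) * (b (t - m).+1 dst - b (t - n).+1 dst)
                   / (6 * (f t src + b t dst))) <= r_ss1 p t.+1.
Proof.
move=> ht; have T1t : T1 delta p f b <= t%:R.
  by apply: le_trans ht; rewrite -[leLHS]add0r lerD ?ler0n ?le_max ?lexx ?orbT.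
have Lt : (Lmax m n <= t)%N.
  by rewrite -(ler_nat R); apply: le_trans ht; rewrite lerDl le_max lexx.
rewrite /Lmax in Lt; have mL : (m.-1 < Lmax m n)%N by rewrite /Lmax; lia.
have nL : (n.-1 < Lmax m n)%N by rewrite /Lmax; lia.
have [-> ->] : (t - m).+1 = (t - m.-1)%N /\ (t - n).+1 = (t - n.-1)%N by split; lia.
rewrite /r_ss1 !(p_succ traj) // !(fedge_pair _ _ _ (s1_neq_s2 m_gt0 n_gt1) (out_src m_gt0 n_gt1)).
rewrite arrival1 ?arrival2; try lia.
apply: potential_update; rewrite ?p_pos ?r_min_gt0 ?(b_dst _).1 ?(ltW (f_src _).1) //.
- exact: ltW (b_dst _).1.
- apply: b_dst_mono; lia.
- apply: b_dst_mono; lia.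
- exact: r_min_src_ratio.
- exact: r_min_dst_ratio.
- exact: r_min_dst_ratio.
- exact: source_pheromone_bound.
Qed.

End TwoPathDynamics.

Theorem mainTheorem13 (R : realType) (m n : nat) (l : TPV m n -> R) (delta : R)
    (p : nat -> TPV m n -> TPV m n -> R) (f b : nat -> TPV m n -> R) :
  (0 < m)%N -> (m < n)%N ->
  0 < delta -> delta < 1 ->
  (forall v, l v = 0) ->
  is_trajectory (@TPE m n) src dst l delta p f b ->
  (forall u v, TPE u v -> 0 < p 0%N u v) ->
  (forall t : nat, 0 < f t src /\ f t src <= f t.+1 src) ->
  (forall t : nat, 0 < b t dst /\ b t dst <= b t.+1 dst) ->
  (forall v, v != src -> v != dst -> 0 <= f 0%N v /\ f 0%N v <= f 0%N src) ->
  (forall v, v != src -> v != dst -> 0 <= b 0%N v /\ b 0%N v <= b 0%N dst) ->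
  forall t : nat, (Lmax m n)%:R + Num.max 0 (T1 delta p f b) <= t%:R ->
    r_ss1 p t.+1 >=
    r_min p t * (1 + (1 - delta) * (b (t - m).+1 dst - b (t - n).+1 dst)
                     / (6 * (f t src + b t dst))).
Proof. exact: potential_growth. Qed.
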